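(* Let $p,q\ge1$ and $d=p+q$. Assume that $f$ belongs to a finite-dimensional vector subspace $V\subseteq C(\mathbb{R}^d)$ such that $\tau_h(V)\subseteq V$ for all $h\in\mathbb{R}^d$ and $O_A(V)\subseteq V$ for all $A\in\mathbf{O}(p,q)$. Then $f$ is an ordinary polynomial in $d$ real variables.
   Context: $\mathbf{O}(p,q)=\{A\in\mathrm{GL}(d,\mathbb{R}): A^TI_{p,q}A=I_{p,q}\}$, where $I_{p,q}$ is the block-diagonal matrix $\mathrm{diag}(I_p,-I_q)$ (the isometry group of the quadratic form $\sum_{k=1}^px_k^2-\sum_{k=1}^qy_k^2$). For $g\in C(\mathbb{R}^d)$: $\tau_hg(x)=g(x+h)$, $O_Ag(x)=g(Ax)$. *)

From HB Require Import structures.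
From mathcomp Require Import all_boot all_order all_algebra.
From mathcomp Require Import all_classical all_reals all_analysis.
From mathcomp Require mpoly.
Set Implicit Arguments. Unset Strict Implicit. Unset Printing Implicit Defensive.
Import Order.TTheory GRing.Theory Num.Theory.
Import numFieldNormedType.Exports.
Local Open Scope ring_scope.
Local Open Scope classical_set_scope.

Definition Ipq (R : realType) (p q : nat) : 'M[R]_(p + q) :=
  block_mx 1%:M 0 0 (- 1%:M).

Definition Opq (R : realType) (p q : nat) : set 'M[R]_(p + q) :=
  [set A | A \in unitmx /\ A^T *m Ipq R p q *m A = Ipq R p q].

Definition tau (R : realType) (d : nat) (h : 'cV[R]_d) (g : 'cV[R]_d -> R) :
  'cV[R]_d -> R := fun x => g (x + h).
Definition OA (R : realType) (d : nat) (A : 'M[R]_d) (g : 'cV[R]_d -> R) :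
  'cV[R]_d -> R := fun x => g (A *m x).

Definition is_subspace (R : realType) (d : nat) (V : set ('cV[R]_d -> R)) :=
  V (fun _ => 0) /\
  (forall f g, V f -> V g -> V (fun x => f x + g x)) /\
  (forall (a : R) f, V f -> V (fun x => a * f x)).

Definition finite_dim (R : realType) (d : nat) (V : set ('cV[R]_d -> R)) :=
  exists (n : nat) (b : 'I_n -> ('cV[R]_d -> R)),
    (forall i, V (b i)) /\
    (forall f, V f -> exists c : 'I_n -> R,
       forall x, f x = \sum_(i < n) c i * b i x).

Definition is_polynomial_fun (R : realType) (d : nat) (f : 'cV[R]_d -> R) :=
  exists P : mpoly.mpoly d R, forall x, f x = mpoly.meval (fun i => x i 0) P.

From HB Require Import structures.
From mathcomp Require Import zify.
From mathcomp Require Import all_boot all_order all_algebra.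
From mathcomp Require Import mpoly.
From mathcomp Require Import all_classical all_reals all_analysis.
From mathcomp Require Import ring lra.
From mathcomp Require Import complex.
Set Implicit Arguments. Unset Strict Implicit. Unset Printing Implicit Defensive.
Import Order.TTheory GRing.Theory Num.Theory.
Import numFieldNormedType.Exports.
Local Open Scope ring_scope.

(* Fix a direction v and let mu be the minimal polynomial of the translation
   tau_v acting on the finite-dimensional space V.  If v is isotropic
   (v = e_I +- e_J with I < p <= J), Lorentz boosts in O(p,q) map v to lam v for
   every lam > 0 and preserve V, so mu also annihilates tau_(m v) = tau_v^m:
   mu divides mu(X^m) for every m > 0, all roots of mu are roots of unity, and
   some (tau_(K v) - 1)^r kills V.  Rescaling, Delta_(t v)^r = 0 on V for all
   t > 0, and since every coordinate vector is the midpoint of two isotropic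
   ones, all N-th differences of f along coordinate directions vanish.  A
   continuous function of one variable with this property agrees with its
   interpolation polynomial on every lattice Z / K, hence everywhere; applied
   coordinate by coordinate, f equals its interpolant on the grid {0..N-1}^d. *)

Section ShiftPolynomial.
Variables (R : comNzRingType) (V : zmodType).
Implicit Types (P Q : {poly R}) (h k : V) (g : V -> R).

Definition polyshift P h g : V -> R :=
  fun x => \sum_(i < size P) P`_i * g (x + h *+ i).

Lemma polyshift_widen P h g x N : (size P <= N)%N ->
  polyshift P h g x = \sum_(i < N) P`_i * g (x + h *+ i).
Proof.
move=> le; rewrite /polyshift (big_ord_widen N (fun i => P`_i * g (x + h *+ i)) le).
rewrite big_mkcond /=; apply: eq_bigr => i _; case: ifP => // /negbT.
by rewrite -leqNgt => hi; rewrite nth_default // mul0r.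
Qed.

Lemma polyshift0 h g x : polyshift 0 h g x = 0.
Proof. by rewrite /polyshift size_poly0 big_ord0. Qed.

Lemma polyshiftC c h g x : polyshift c%:P h g x = c * g x.
Proof.
rewrite (@polyshift_widen c%:P _ _ _ 1) ?size_polyC ?leq_b1 //.
by rewrite big_ord1 coefC /= mulr0n addr0.
Qed.

Lemma polyshiftD P Q h g x :
  polyshift (P + Q) h g x = polyshift P h g x + polyshift Q h g x.
Proof.
set N := maxn (size P) (size Q).
rewrite (@polyshift_widen (P + Q) _ _ _ N) ?size_polyD //.
rewrite (@polyshift_widen P _ _ _ N) ?leq_maxl // (@polyshift_widen Q _ _ _ N) ?leq_maxr //.
by rewrite -big_split /=; apply: eq_bigr => i _; rewrite coefD mulrDl.
Qed.

Lemma polyshiftB P Q h g x :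
  polyshift (P - Q) h g x = polyshift P h g x - polyshift Q h g x.
Proof.
set N := maxn (size P) (size Q).
rewrite (@polyshift_widen (P - Q) _ _ _ N); last first.
  by rewrite (leq_trans (size_polyD _ _)) // size_polyN.
rewrite (@polyshift_widen P _ _ _ N) ?leq_maxl // (@polyshift_widen Q _ _ _ N) ?leq_maxr //.
by rewrite -sumrB /=; apply: eq_bigr => i _; rewrite coefB mulrBl.
Qed.

Lemma polyshiftZ c P h g x : polyshift (c *: P) h g x = c * polyshift P h g x.
Proof.
rewrite (@polyshift_widen (c *: P) _ _ _ (size P)) ?size_scale_leq //.
by rewrite /polyshift mulr_sumr; apply: eq_bigr => i _; rewrite coefZ mulrA.
Qed.

Lemma polyshift_fun0 P h x : polyshift P h (fun _ => 0) x = 0.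
Proof. by rewrite /polyshift big1 // => i _; rewrite mulr0. Qed.

Lemma polyshift_sum P h n (c : 'I_n -> R) (b : 'I_n -> V -> R) x :
  polyshift P h (fun y => \sum_(j < n) c j * b j y) x =
  \sum_(j < n) c j * polyshift P h (b j) x.
Proof.
rewrite /polyshift; under eq_bigr do rewrite mulr_sumr.
rewrite exchange_big /=; apply: eq_bigr => j _; rewrite mulr_sumr.
by apply: eq_bigr => i _; rewrite mulrCA.
Qed.

Lemma polyshift_translate P h k g x :
  polyshift P h (fun y => g (y + k)) x = polyshift P h g (x + k).
Proof. by apply: eq_bigr => i _; rewrite addrAC. Qed.

Lemma polyshiftMX P h g x :
  polyshift (P * 'X) h g x = polyshift P h (fun y => g (y + h)) x.
Proof.
have [->|P0] := eqVneq P 0; first by rewrite mul0r !polyshift0.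
rewrite /polyshift size_mulX // big_ord_recl coefMX /= mul0r add0r.
apply: eq_bigr => i _; rewrite coefMX /= /bump /= add1n /=.
by rewrite mulrSr addrA.
Qed.

Lemma polyshiftM P Q h g x :
  polyshift (P * Q) h g x = polyshift P h (polyshift Q h g) x.
Proof.
elim/poly_ind: P Q g x => [|P c IH] Q g x; first by rewrite mul0r !polyshift0.
rewrite mulrDl -mulrA -(commr_polyX Q) polyshiftD IH polyshiftD polyshiftMX.
rewrite polyshiftC mul_polyC polyshiftZ; congr (_ + _).
by congr (polyshift _ _ _ _); apply/funext => y; rewrite polyshiftMX polyshift_translate.
Qed.

Lemma polyshiftMXn P h m g x :
  polyshift (P * 'X^m) h g x = polyshift P h (fun y => g (y + h *+ m)) x.
Proof.
elim: m g => [|m IH] g.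
  by rewrite expr0 mulr1; congr (polyshift _ _ _ _); apply/funext => y; rewrite addr0.
rewrite exprSr mulrA polyshiftMX IH; congr (polyshift _ _ _ _); apply/funext => y.
by rewrite mulrSr addrA.
Qed.

Lemma polyshift_comp_Xn P h m g x :
  polyshift P (h *+ m) g x = polyshift (P \Po 'X^m) h g x.
Proof.
elim/poly_ind: P g x => [|P c IH] g x; first by rewrite comp_poly0 !polyshift0.
rewrite comp_polyD comp_polyM comp_polyX comp_polyC !polyshiftD !polyshiftC.
by rewrite polyshiftMX IH polyshiftMXn.
Qed.

End ShiftPolynomial.

Section FiniteDifference.
Variables (R : comNzRingType) (V : zmodType).
Implicit Types (a b : V) (g : V -> R).

Definition diff a g : V -> R := fun x => g (x + a) - g x.
Definition diffn N a g : V -> R := iter N (diff a) g.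

Lemma diffn_polyshift N a g : diffn N a g = polyshift (('X - 1) ^+ N) a g.
Proof.
apply/funext; elim: N => [|N IH] x; first by rewrite expr0 -polyC1 polyshiftC mul1r.
rewrite exprS polyshiftM.
have <- : diffn N a g = polyshift (('X - 1) ^+ N) a g by apply/funext.
rewrite /= /diff.
rewrite /polyshift -polyC1 size_XsubC !big_ord_recl big_ord0 /= !coefB !coefX !coefC /=.
by rewrite /bump /= mulr1n addr0 subr0 mul1r sub0r mulN1r addr0 addrC.
Qed.

Lemma diffnS N a g : diffn N.+1 a g = diffn N a (diff a g).
Proof. exact: iterSr. Qed.

Lemma diff_comm a b g : diff a (diff b g) = diff b (diff a g).
Proof. by apply/funext => x; rewrite /diff (addrAC x a b); ring. Qed.

Lemma diffn_diff N a b g : diffn N a (diff b g) = diff b (diffn N a g).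
Proof. by elim: N => [|N IH] //=; rewrite IH diff_comm. Qed.

Lemma diffn_translate N a b g :
  diffn N a (fun x => g (x + b)) = fun x => diffn N a g (x + b).
Proof. by elim: N => [|N IH] //=; rewrite IH; apply/funext => x; rewrite /diff addrAC. Qed.

Lemma diffn_sub N a (g1 g2 : V -> R) :
  diffn N a (fun x => g1 x - g2 x) = fun x => diffn N a g1 x - diffn N a g2 x.
Proof. by elim: N => [|N IH] //=; rewrite IH; apply/funext => x; rewrite /diff; ring. Qed.

Lemma diffn_add N a (g1 g2 : V -> R) :
  diffn N a (fun x => g1 x + g2 x) = fun x => diffn N a g1 x + diffn N a g2 x.
Proof. by elim: N => [|N IH] //=; rewrite IH; apply/funext => x; rewrite /diff; ring. Qed.

Lemma diffn_cst0 N a : diffn N a (fun _ => 0 : R) = fun _ => 0.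
Proof. by elim: N => [|N IH] //=; rewrite IH; apply/funext => x; rewrite /diff subr0. Qed.

Lemma diffn_eq0_leq N M a g :
  diffn N a g = (fun _ => 0) -> (N <= M)%N -> diffn M a g = (fun _ => 0).
Proof.
move=> h le; have -> : diffn M a g = diffn (M - N) a (diffn N a g).
  by rewrite /diffn -iterD subnK.
by rewrite h diffn_cst0.
Qed.

Lemma diff_addv a b g : diff (a + b) g = fun x => diff b g (x + a) + diff a g x.
Proof. by apply/funext => x; rewrite /diff addrA addrA subrK. Qed.

(* Delta_(a+b) = Delta_b tau_a + Delta_a, and the two summands commute. *)
Lemma diffn_addv_eq0 N M a b g :
  diffn N a g = (fun _ => 0) -> diffn M b g = (fun _ => 0) ->
  diffn (N + M) (a + b) g = (fun _ => 0).
Proof.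
elim: N M g => [|N IHN] M g; first by move=> g0 _; rewrite [g]g0 diffn_cst0.
elim: M g => [|M IHM] g; first by move=> _ g0; rewrite [g]g0 diffn_cst0.
move=> hN hM; rewrite addSn diffnS diff_addv diffn_add.
have -> : diffn (N + M.+1) (a + b) (fun x => diff b g (x + a)) = fun _ => 0.
  rewrite diffn_translate addnS -addSn IHM //; last by rewrite -diffnS.
  by rewrite diffn_diff hN; apply/funext => x; rewrite /diff subr0.
have -> : diffn (N + M.+1) (a + b) (diff a g) = fun _ => 0.
  rewrite IHN //; first by rewrite -diffnS.
  by rewrite diffn_diff hM; apply/funext => x; rewrite /diff subr0.
by apply/funext => x; rewrite addr0.
Qed.

End FiniteDifference.

Section Annihilator.
Variables (R : fieldType) (W : zmodType) (S : set (W -> R)).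

Definition finitely_spanned := exists n (b : 'I_n -> W -> R), (forall i, S (b i)) /\
  (forall f, S f -> exists c : 'I_n -> R, forall x, f x = \sum_(i < n) c i * b i x).

Definition translation_invariant := forall h g, S g -> S (fun x => g (x + h)).

Variable h : W.

Definition annihilates (P : {poly R}) := forall g, S g -> forall x, polyshift P h g x = 0.

Lemma annihilates_mull Q M : annihilates M -> annihilates (Q * M).
Proof.
move=> hM g Sg x; rewrite polyshiftM.
have -> : polyshift M h g = fun _ => 0 by apply/funext => y; exact: hM.
exact: polyshift_fun0.
Qed.

Lemma annihilates_dvdp M P : annihilates M -> M %| P -> annihilates P.
Proof. by move=> hM /divpK <-; apply: annihilates_mull. Qed.

(* The characteristic polynomial of the matrix of tau_h on a spanning family
   annihilates S, by Cayley-Hamilton; the family is padded by a zero function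
   so that the matrix is square of positive size. *)
Lemma annihilator_exists :
  finitely_spanned -> (forall g, S g -> S (fun x => g (x + h))) ->
  exists2 P, P != 0 & annihilates P.
Proof.
move=> [n [b [Sb spanb]]] Htau.
pose b' (i : 'I_n.+1) : W -> R := if unlift ord0 i is Some j then b j else (fun _ => 0).
have span' : forall f, S f -> exists c : 'I_n.+1 -> R,
    forall x, f x = \sum_(i < n.+1) c i * b' i x.
  move=> f /spanb [c hc]; exists (fun i => if unlift ord0 i is Some j then c j else 0).
  move=> x; rewrite big_ord_recl /b' unlift_none mul0r add0r hc.
  by apply: eq_bigr => i _; rewrite liftK.
have hC : forall j : 'I_n.+1, exists c : 'I_n.+1 -> R,
    forall x, b' j (x + h) = \sum_(i < n.+1) c i * b' i x.
  move=> j; rewrite /b'; case: (unlift ord0 j) => [j'|]; first by apply/span'/Htau.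
  by exists (fun _ => 0) => x; rewrite big1 // => i _; rewrite mul0r.
have [C HC] := boolp.choice hC.
pose M : 'M[R]_n.+1 := \matrix_(j, i) C j i.
have horner_M : forall P j x,
    polyshift P h (b' j) x = \sum_(i < n.+1) horner_mx M P j i * b' i x.
  elim/poly_ind => [|P c IH] j x.
    by rewrite polyshift0 rmorph0 big1 // => i _; rewrite mxE mul0r.
  rewrite polyshiftD polyshiftC polyshiftMX.
  have -> : (fun y => b' j (y + h)) = fun y => \sum_(k < n.+1) C j k * b' k y.
    by apply/funext => y; rewrite HC.
  rewrite polyshift_sum (commr_polyX P) rmorphD rmorphM /= horner_mx_X horner_mx_C.
  under eq_bigr do rewrite IH.
  rewrite -mulmxE; under [RHS]eq_bigr do rewrite !mxE mulrDl.
  rewrite big_split /=.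
  have -> : \sum_(i < n.+1) c *+ (j == i) * b' i x = c * b' j x.
    rewrite (bigD1 j) //= eqxx mulr1n big1 ?addr0 // => i ij.
    by rewrite eq_sym (negbTE ij) mulr0n mul0r.
  congr (_ + _); under [RHS]eq_bigr do rewrite mulr_suml.
  rewrite exchange_big /=; apply: eq_bigr => k _; rewrite mulr_sumr.
  by apply: eq_bigr => i _; rewrite mxE mulrA.
exists (char_poly M); first exact/monic_neq0/char_poly_monic.
move=> g /span' [c hc] x.
have -> : g = fun y => \sum_(i < n.+1) c i * b' i y by apply/funext => y; rewrite hc.
rewrite polyshift_sum big1 // => i _; rewrite horner_M Cayley_Hamilton big1 ?mulr0 // => k _.
by rewrite mxE mul0r.
Qed.

Definition min_annihilator (mu : {poly R}) := [/\ mu != 0, annihilates mu &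
  forall P, P != 0 -> annihilates P -> (size mu <= size P)%N].

Lemma min_annihilator_exists : (exists2 P, P != 0 & annihilates P) ->
  exists mu, min_annihilator mu.
Proof.
move=> [P P0 AP].
have exn : exists k, `[< exists P, [/\ P != 0, annihilates P & size P = k] >].
  by exists (size P); apply/asboolP; exists P.
case: (ex_minnP exn) => k /asboolP [mu [mu0 Amu smu]] kmin.
exists mu; split => // Q Q0 AQ; rewrite smu; apply: kmin; apply/asboolP; by exists Q.
Qed.

Variable mu : {poly R}.
Hypothesis mu_min : min_annihilator mu.

Lemma min_annihilator_dvdp P : annihilates P -> mu %| P.
Proof.
case: mu_min => mu0 Amu mumin AP; apply: contraT => mu_ndvd.
have mod0 : P %% mu != 0 by rewrite -/(dvdp _ _).
suff /(mumin _ mod0) : annihilates (P %% mu) by rewrite leqNgt ltn_modp mu0.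
have -> : P %% mu = P - P %/ mu * mu by rewrite {2}(divp_eq P mu) addrAC subrr add0r.
by move=> g Sg x; rewrite polyshiftB AP // (annihilates_mull _ Amu) // subr0.
Qed.

(* A root 0 of mu could be cancelled, since tau_h is invertible on S. *)
Lemma min_annihilator_coef0 : translation_invariant -> mu`_0 != 0.
Proof.
case: mu_min => mu0 Amu mumin Htau; apply: contraT; rewrite negbK => /eqP c0.
have : 'X %| mu by rewrite -(subr0 'X) dvdp_XsubCl /root horner_coef0 c0.
move=> /divpK emu; set mu' := mu %/ 'X in emu.
have mu'0 : mu' != 0 by apply: contraNneq mu0 => e; rewrite -emu e mul0r.
suff /(mumin _ mu'0) : annihilates mu' by rewrite -emu size_mulX // ltnn.
move=> g Sg x.
have -> : polyshift mu' h g x = polyshift (mu' * 'X) h (fun z => g (z - h)) x.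
  by rewrite polyshiftMX; congr (polyshift _ _ _ _); apply/funext => y; rewrite addrK.
by rewrite emu; apply/Amu/Htau.
Qed.

End Annihilator.

Lemma powers_in_seq_unity (F : fieldType) (z : F) (rs : seq F) :
  z != 0 -> (forall m, (0 < m)%N -> z ^+ m \in rs) -> z ^+ (size rs)`! = 1.
Proof.
move=> z0 hm.
set s := [seq z ^+ i.+1 | i <- iota 0 (size rs).+1].
have : ~~ uniq s.
  have sub : {subset s <= rs} by move=> y /mapP [i _ ->]; apply: hm.
  by apply/negP => /uniq_leq_size /(_ sub); rewrite size_map size_iota ltnn.
case/(uniqPn 0) => i [j [ij js]]; rewrite size_map size_iota in js.
rewrite !(nth_map 0%N) ?size_iota ?(ltn_trans ij) // !nth_iota ?(ltn_trans ij) // !add0n.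
move=> e; have ez : z ^+ (j - i) = 1.
  apply: (mulfI (expf_neq0 i.+1 z0)).
  by rewrite -exprD mulr1 addSn subnKC ?(ltnW ij) // e.
have /dvdnP [k ->] : (j - i %| (size rs)`!)%N.
  by apply: dvdn_fact; rewrite subn_gt0 ij (leq_trans (leq_subr _ _)) // -ltnS.
by rewrite mulnC exprM ez expr1n.
Qed.

Lemma prod_XsubC_dvdp_Xn_sub1 (F : fieldType) (rs : seq F) K :
  (forall z, z \in rs -> z ^+ K = 1) ->
  \prod_(z <- rs) ('X - z%:P) %| ('X^K - 1) ^+ size rs.
Proof.
elim: rs => [|z rs IH] h; first by rewrite big_nil expr0 dvdpp.
rewrite big_cons /= exprS; apply: dvdp_mul.
  by rewrite dvdp_XsubCl /root !hornerE h ?mem_head // subrr.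
by apply: IH => y yr; apply: h; rewrite in_cons yr orbT.
Qed.

(* Over the algebraic closure R[i], the roots of mu are stable under z |-> z^m,
   hence are roots of unity. *)
Lemma dvdp_Xn_sub1_exp (R : rcfType) (mu : {poly R}) :
  mu != 0 -> mu`_0 != 0 -> (forall m, (0 < m)%N -> mu %| mu \Po 'X^m) ->
  exists K r, (0 < K)%N /\ mu %| ('X^K - 1) ^+ r.
Proof.
move=> mu0 c0 hdiv.
pose f := real_complex R; pose muC := map_poly f mu.
have [rs Hrs] := closed_field_poly_normal muC.
have lc0 : lead_coef muC != 0 by rewrite lead_coef_map fmorph_eq0 lead_coef_eq0.
have inrs z : root muC z = (z \in rs) by rewrite Hrs rootZ // root_prod_XsubC.
exists (size rs)`!, (size rs); split; first exact: fact_gt0.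
rewrite -(dvdp_map f) rmorphXn rmorphB /= map_polyXn rmorph1.
rewrite -/muC Hrs dvdpZl //; apply: prod_XsubC_dvdp_Xn_sub1 => z zr.
apply: powers_in_seq_unity.
  apply: contraTneq zr => ->; rewrite -inrs /root horner_coef0 coef_map /=.
  by rewrite fmorph_eq0.
move=> m m0; rewrite -inrs.
have dC : muC %| muC \Po 'X^m.
  by rewrite /muC -(map_polyXn f) -map_comp_poly dvdp_map hdiv.
have rz : root muC z by rewrite inrs.
by have := root_dvdp dC rz; rewrite /root horner_comp hornerXn.
Qed.

Section Boost.
Variables (R : comNzRingType) (n : nat) (I J : 'I_n).
Hypothesis IJ : I != J.

Definition diag2_mx : 'M[R]_n := delta_mx I I + delta_mx J J.
Definition swap2_mx : 'M[R]_n := delta_mx I J + delta_mx J I.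

(* For (1 + a)^2 - s^2 = 1 and e_I, e_J of opposite signature, this is a
   Lorentz boost in the (e_I, e_J)-plane. *)
Definition boost (a s : R) : 'M[R]_n := 1%:M + a *: diag2_mx + s *: swap2_mx.

Lemma diag2_swap2_mul : [/\ diag2_mx *m diag2_mx = diag2_mx,
  diag2_mx *m swap2_mx = swap2_mx, swap2_mx *m diag2_mx = swap2_mx &
  swap2_mx *m swap2_mx = diag2_mx].
Proof.
rewrite /diag2_mx /swap2_mx !mulmxDl !mulmxDr !mul_delta_mx_cond !eqxx (negbTE IJ).
by rewrite eq_sym (negbTE IJ) /= !mulr0n !mulr1n !addr0 !add0r; split => //; rewrite addrC.
Qed.

Lemma boost_mul a s a' s' : boost a s *m boost a' s' =
  boost (a + a' + a * a' + s * s') (s + s' + a * s' + s * a').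
Proof.
have [DD DS SD SS] := diag2_swap2_mul.
rewrite /boost !mulmxDl !mulmxDr !mul1mx !mulmx1 -!scalemxAl -!scalemxAr !scalerA.
by rewrite DD DS SD SS; apply/matrixP => i j; rewrite !mxE; ring.
Qed.

Lemma boost00 : boost 0 0 = 1%:M.
Proof. by rewrite /boost !scale0r !addr0. Qed.

Lemma boost_tr a s : (boost a s)^T = boost a s.
Proof.
apply/matrixP => i j; rewrite /boost /diag2_mx /swap2_mx !mxE (eq_sym j i).
rewrite [(j == I) && _]andbC [(j == J) && _]andbC.
by rewrite [((j == I) && _)]andbC [((j == J) && _)]andbC; ring.
Qed.

Lemma boost_eigen a s (sg : R) : sg * sg = 1 ->
  boost a s *m (delta_mx I 0 + sg *: delta_mx J 0 : 'cV[R]_n) =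
  (1 + a + sg * s) *: (delta_mx I 0 + sg *: delta_mx J 0).
Proof.
move=> sg2; rewrite /boost /diag2_mx /swap2_mx !mulmxDl !mul1mx -!scalemxAl !mulmxDr.
rewrite -!scalemxAr !mulmxDl !mul_delta_mx_cond !eqxx (negbTE IJ) eq_sym (negbTE IJ) /=.
apply/matrixP => i j; rewrite !mxE /= !addr0 !add0r.
set u := ((i == I) && (j == 0))%:R; set w := ((i == J) && (j == 0))%:R.
have -> : s * (w + sg * u) = sg * s * u + s * ((sg * sg) * w) by rewrite sg2; ring.
ring.
Qed.

End Boost.

Section LorentzBoost.
Variables (R : realType) (p q : nat).
Local Notation d := (p + q).
Local Notation e k := (delta_mx k 0 : 'cV[R]_d).
Implicit Types (lam : R).

Definition Ipq_sign (k : 'I_d) : R := if (k < p)%N then 1 else -1.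

Lemma Ipq_entry (i j : 'I_d) : Ipq R p q i j = (i == j)%:R * Ipq_sign i.
Proof.
rewrite /Ipq /Ipq_sign; case: (split_ordP i) => i' ->; case: (split_ordP j) => j' ->.
- by rewrite block_mxEul mxE /= eq_lshift mulr1.
- by rewrite block_mxEur mxE /= eq_shift mulr1.
- by rewrite block_mxEdl mxE /= eq_sym eq_shift mul0r.
- by rewrite block_mxEdr !mxE /= eq_rshift mulrN1.
Qed.

Lemma Ipq_mul_delta_mx (k l : 'I_d) :
  Ipq R p q *m delta_mx k l = Ipq_sign k *: delta_mx k l.
Proof.
apply/matrixP => i j; rewrite mxE; under eq_bigr do rewrite Ipq_entry.
rewrite !mxE (bigD1 k) //= big1 ?addr0; last first.
  by move=> m mk; rewrite mxE (negbTE mk) mulr0.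
rewrite mxE eqxx /=; have [->|ik] := eqVneq i k; first by rewrite mul1r mulrC.
by rewrite !mul0r mulr0.
Qed.

Lemma delta_mx_mul_Ipq (k l : 'I_d) :
  delta_mx k l *m Ipq R p q = Ipq_sign l *: delta_mx k l.
Proof.
apply/matrixP => i j; rewrite mxE; under eq_bigr do rewrite Ipq_entry.
rewrite !mxE (bigD1 l) //= big1 ?addr0; last first.
  by move=> m ml; rewrite mxE (negbTE ml) andbF mul0r.
rewrite mxE eqxx andbT; have [->|lj] := eqVneq l j; first by rewrite mul1r andbT mulrC.
by rewrite mul0r andbF !mulr0.
Qed.

Definition dilatable (v : 'cV[R]_d) := forall lam, 0 < lam ->
  exists B B', [/\ @Opq R p q B, @Opq R p q B', B' *m B = 1%:M & B *m v = lam *: v].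

Lemma dilatableN v : dilatable v -> dilatable (- v).
Proof.
move=> dv lam lam0; have [B [B' [OB OB' BB' Bv]]] := dv lam lam0.
by exists B, B'; rewrite mulmxN Bv scalerN.
Qed.

Variables (I J : 'I_d).
Hypotheses (Ip : (I < p)%N) (Jq : (p <= J)%N).

Let IJ : I != J. Proof. by apply: contraTneq Ip => ->; rewrite -leqNgt. Qed.

Lemma boost_Ipq a s : boost I J a s *m Ipq R p q = Ipq R p q *m boost I J a (- s).
Proof.
rewrite /boost /diag2_mx /swap2_mx !mulmxDl !mulmxDr !mul1mx !mulmx1 -!scalemxAl.
rewrite -!scalemxAr !mulmxDl !mulmxDr !Ipq_mul_delta_mx !delta_mx_mul_Ipq /Ipq_sign Ip.
by rewrite ltnNge Jq /=; apply/matrixP => i j; rewrite !mxE; ring.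
Qed.

Lemma boost_Opq a s : (1 + a) ^+ 2 - s ^+ 2 = 1 -> @Opq R p q (boost I J a s).
Proof.
move=> hyp.
have inv s' : s' ^+ 2 = s ^+ 2 -> boost I J a s' *m boost I J a (- s') = 1%:M.
  move=> e; rewrite boost_mul //.
  have -> : a + a + a * a + s' * - s' = (1 + a) ^+ 2 - s' ^+ 2 - 1 by ring.
  by rewrite e hyp subrr (_ : s' + - s' + a * - s' + s' * a = 0) ?boost00 //; ring.
split; first by case/mulmx1_unit: (inv s erefl).
by rewrite boost_tr boost_Ipq -mulmxA -{2}(opprK s) inv ?sqrrN // mulmx1.
Qed.

(* The parameters are cosh(log lam) - 1 and sinh(log lam). *)
Definition hboost lam := boost I J ((lam + lam^-1) / 2 - 1) ((lam - lam^-1) / 2).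

Lemma hboost_Opq lam : lam != 0 -> @Opq R p q (hboost lam).
Proof. by move=> lam0; apply: boost_Opq; field. Qed.

Lemma hboostV lam : lam != 0 -> hboost lam^-1 *m hboost lam = 1%:M.
Proof.
move=> lam0; rewrite /hboost boost_mul // invrK.
by rewrite [X in boost _ _ X _](_ : _ = 0) ?[X in boost _ _ _ X](_ : _ = 0) ?boost00 //; field.
Qed.

Lemma hboost_add lam : lam != 0 ->
  hboost lam *m (e I + e J) = lam *: (e I + e J).
Proof.
move=> lam0; have := @boost_eigen _ _ _ _ IJ ((lam + lam^-1) / 2 - 1) ((lam - lam^-1) / 2) 1 (mulr1 1).
by rewrite mul1r scale1r => ->; congr (_ *: _); field.
Qed.

Lemma hboost_sub lam : lam != 0 ->
  hboost lam *m (e I - e J) = lam^-1 *: (e I - e J).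
Proof.
move=> lam0; have := @boost_eigen _ _ _ _ IJ ((lam + lam^-1) / 2 - 1) ((lam - lam^-1) / 2) (-1).
by rewrite mulrNN mulr1 mulN1r scaleN1r => /(_ erefl) ->; congr (_ *: _); field.
Qed.

Lemma dilatable_add : dilatable (e I + e J).
Proof.
move=> lam /lt0r_neq0 lam0; exists (hboost lam), (hboost lam^-1); split.
- exact: hboost_Opq.
- by apply: hboost_Opq; rewrite invr_eq0.
- exact: hboostV.
- exact: hboost_add.
Qed.

Lemma dilatable_sub : dilatable (e I - e J).
Proof.
move=> lam /lt0r_neq0 lam0; exists (hboost lam^-1), (hboost lam); split.
- by apply: hboost_Opq; rewrite invr_eq0.
- exact: hboost_Opq.
- by rewrite -{1}(invrK lam) hboostV ?invr_eq0.
- by rewrite hboost_sub ?invr_eq0 ?invrK.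
Qed.

End LorentzBoost.

Section DilatableDirection.
Variables (R : realType) (p q : nat) (S : set ('cV[R]_(p + q) -> R)).
Hypotheses (S_span : finitely_spanned S) (S_tau : translation_invariant S)
  (S_OA : forall A g, @Opq R p q A -> S g -> S (OA A g)).

Lemma annihilates_OA (B B' : 'M[R]_(p + q)) k P :
  @Opq R p q B -> @Opq R p q B' -> B' *m B = 1%:M ->
  annihilates S (B *m k) P -> annihilates S k P.
Proof.
move=> OB OB' BB' AP g Sg x.
have -> : g = fun y => OA B' g (B *m y).
  by apply/funext => y; rewrite /OA mulmxA BB' mul1mx.
have -> : polyshift P k (fun y => OA B' g (B *m y)) x = polyshift P (B *m k) (OA B' g) (B *m x).
  by apply: eq_bigr => i _; rewrite mulmxDr raddfMn.
exact/AP/S_OA.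
Qed.

Lemma annihilates_dilate v t lam P : dilatable v -> 0 < lam ->
  annihilates S ((lam * t) *: v) P -> annihilates S (t *: v) P.
Proof.
move=> dv /dv [B [B' [OB OB' BB' Bv]]] AP.
by apply: (annihilates_OA OB OB' BB'); rewrite -scalemxAr Bv scalerA mulrC.
Qed.

(* Dilations of v conjugate tau_v to tau_(m v), so the minimal annihilator mu
   divides mu(X^m). *)
Lemma dilatable_diffn_eq0 v : dilatable v ->
  exists N, forall t, 0 < t -> forall g, S g -> diffn N (t *: v) g = fun _ => 0.
Proof.
move=> dv.
have [mu mu_min] := min_annihilator_exists (annihilator_exists S_span (S_tau v)).
have mu_dvd m : (0 < m)%N -> mu %| mu \Po 'X^m.
  move=> m0; apply: (min_annihilator_dvdp mu_min) => g Sg x.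
  rewrite -polyshift_comp_Xn -scaler_nat.
  suff : annihilates S (m%:R *: v) mu by apply.
  apply: (annihilates_dilate (lam := m%:R^-1) dv); first by rewrite invr_gt0 ltr0n.
  by rewrite mulVf ?pnatr_eq0 -?lt0n // scale1r; case: mu_min.
have [mu0 mu_ann _] := mu_min.
have [K [r [K0 dvdK]]] := dvdp_Xn_sub1_exp mu0 (min_annihilator_coef0 mu_min S_tau) mu_dvd.
have annK : annihilates S (K%:R *: v) (('X - 1) ^+ r).
  move=> g Sg x; rewrite scaler_nat polyshift_comp_Xn rmorphXn rmorphB /= comp_polyX.
  by rewrite comp_polyC; apply: (annihilates_dvdp mu_ann dvdK).
exists r => t t0 g Sg; apply/funext => x; rewrite diffn_polyshift.
by apply: (annihilates_dilate (lam := K%:R / t)) => //; rewrite ?divfK ?gt_eqF // divr_gt0 ?ltr0n.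
Qed.

Local Notation e k := (delta_mx k 0 : 'cV[R]_(p + q)).

Lemma midpoint_diffn_eq0 u w k : dilatable u -> dilatable w -> u + w = e k + e k ->
  exists N, forall t, 0 < t -> forall g, S g -> diffn N (t *: e k) g = fun _ => 0.
Proof.
move=> /dilatable_diffn_eq0 [N1 H1] /dilatable_diffn_eq0 [N2 H2] uw.
exists (N1 + N2) => t t0 g Sg.
have -> : t *: e k = (t / 2) *: u + (t / 2) *: w.
  by rewrite -scalerDr uw scalerDr -scalerDl -splitr.
by apply: diffn_addv_eq0; [apply: H1 | apply: H2]; rewrite // divr_gt0.
Qed.

(* Each e_k is the midpoint of two isotropic vectors e_I + e_J, e_I - e_J or
   their opposites, with I < p <= J. *)
Lemma coord_diffn_eq0 : (0 < p)%N -> (0 < q)%N -> exists N, forall k t, 0 < t ->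
  forall g, S g -> diffn N (t *: e k) g = fun _ => 0.
Proof.
move=> p0 q0.
have one k : exists N, forall t, 0 < t -> forall g, S g -> diffn N (t *: e k) g = fun _ => 0.
  have [i ->|j ->] := split_ordP k.
    have Ip : (lshift q i < p)%N by rewrite /= ltn_ord.
    have Jq : (p <= rshift p (Ordinal q0))%N by rewrite leq_addr.
    apply: midpoint_diffn_eq0 (dilatable_add Ip Jq) (dilatable_sub Ip Jq) _.
    by apply/matrixP => a b; rewrite !mxE; ring.
  have Ip : (lshift q (Ordinal p0) < p)%N by [].
  have Jq : (p <= rshift p j)%N by rewrite leq_addr.
  apply: midpoint_diffn_eq0 (dilatable_add Ip Jq) (dilatableN (dilatable_sub Ip Jq)) _.
  by apply/matrixP => a b; rewrite !mxE; ring.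
have [N HN] := boolp.choice one.
exists (\sum_k N k) => k t t0 g Sg; apply: (diffn_eq0_leq (HN k t t0 g Sg)).
by rewrite (bigD1 k) //= leq_addr.
Qed.

End DilatableDirection.

Section DiffnLattice.
Variables (R : idomainType) (V : zmodType) (N : nat) (t : V) (phi : V -> R).
Hypothesis phi_diffn : diffn N t phi = fun _ => 0.

Lemma diffn_expand x :
  diffn N t phi x = \sum_(i < N.+1) (('X - 1) ^+ N)`_i * phi (x + t *+ i).
Proof. by rewrite diffn_polyshift /polyshift -polyC1 size_exp_XsubC. Qed.

Lemma diffn_eq0_next x : (forall i, (i < N)%N -> phi (x + t *+ i) = 0) ->
  phi (x + t *+ N) = 0.
Proof.
have lead1 : (('X - 1) ^+ N)`_N = 1 :> R.
  have mon : (('X - 1) ^+ N : {poly R}) \is monic by apply: monic_exp; rewrite -polyC1 monicXsubC.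
  by have := monicP mon; rewrite lead_coefE -polyC1 size_exp_XsubC.
move=> hz; have := congr1 (fun f => f x) phi_diffn.
rewrite /= diffn_expand big_ord_recr /= lead1 mul1r big1 ?add0r //.
by move=> i _; rewrite hz ?mulr0.
Qed.

Lemma diffn_eq0_prev x : (forall i, (0 < i <= N)%N -> phi (x + t *+ i) = 0) -> phi x = 0.
Proof.
have coef0_neq0 : (('X - 1) ^+ N)`_0 != 0 :> R.
  by rewrite -horner_coef0 horner_exp !hornerE expf_neq0 // oppr_eq0 oner_neq0.
move=> hz; have := congr1 (fun f => f x) phi_diffn.
rewrite /= diffn_expand big_ord_recl /= big1 ?addr0 ?mulr0n ?addr0; last first.
  by move=> i _; rewrite hz ?mulr0 //= ltn_ord.
by move/eqP; rewrite mulf_eq0 (negbTE coef0_neq0) /= => /eqP.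
Qed.

Lemma diffn_eq0_int_zeros : (forall i, (i < N)%N -> phi (t *+ i) = 0) ->
  forall z : int, phi (t *~ z) = 0.
Proof.
move=> hz.
have fwd n : phi (t *+ n) = 0.
  elim/ltn_ind: n => n IH; have [nN|Nn] := ltnP n N; first exact: hz.
  rewrite -(subnK Nn) mulrnDr; apply: diffn_eq0_next => i iN.
  by rewrite -mulrnDr; apply: IH; move: iN Nn; lia.
have bwd n : phi (- (t *+ n)) = 0.
  elim/ltn_ind: n => -[|n] IH; first by rewrite oppr0 -(mulr0n t) fwd.
  apply: diffn_eq0_prev => i /andP [i0 iN]; have [hi|hi] := leqP i n.+1.
    have -> : - (t *+ n.+1) + t *+ i = - (t *+ (n.+1 - i)).
      by rewrite -{1}(subnK hi) mulrnDr opprD subrK.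
    by apply: IH; move: i0 hi; lia.
  by rewrite -(subnK (ltnW hi)) mulrnDr addrCA addNr addr0 fwd.
by case=> n; [exact: fwd | exact: bwd].
Qed.

End DiffnLattice.

Lemma size_comp_XaddC_sub (R : idomainType) (Q : {poly R}) (t : R) N :
  (size Q <= N.+1)%N -> (size (Q \Po ('X + t%:P) - Q)%R <= N)%N.
Proof.
move=> sQ; have [->|Q0] := eqVneq Q 0; first by rewrite comp_poly0 subr0 size_poly0.
have sp : (0 < size Q)%N by rewrite size_poly_gt0.
have sc : size (Q \Po ('X + t%:P)) = size Q by rewrite size_comp_poly2 // size_XaddC.
have lc : lead_coef (Q \Po ('X + t%:P)) = lead_coef Q.
  by rewrite lead_coef_comp ?size_XaddC // lead_coefXaddC expr1n mulr1.
apply: (@leq_trans (size Q).-1); last by move: sQ sp; lia.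
apply/leq_sizeP => j hj; rewrite coefB; have [->|jn] := eqVneq j (size Q).-1.
  by rewrite -{1}sc -!lead_coefE lc subrr.
have hj' : (size Q <= j)%N by move: hj jn sp; lia.
by rewrite !nth_default ?sc // subrr.
Qed.

Lemma diffn_horner_eq0 (R : idomainType) N (Q : {poly R}) (t : R) :
  (size Q <= N)%N -> diffn N t (horner Q) = fun _ => 0.
Proof.
elim: N Q => [|N IH] Q sQ.
  by move: sQ; rewrite leqn0 size_poly_eq0 => /eqP ->; apply/funext => x; rewrite /= horner0.
rewrite diffnS; have -> : diff t (horner Q) = horner (Q \Po ('X + t%:P) - Q).
  by apply/funext => x; rewrite /diff hornerD hornerN horner_comp !hornerE.
exact/IH/size_comp_XaddC_sub.
Qed.

Section Lagrange.
Variables (R : numFieldType) (N : nat) (t : R).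

Definition lagrange (i : 'I_N) : {poly R} :=
  (\prod_(j < N | j != i) ((i%:R - j%:R) * t))^-1 *:
     \prod_(j < N | j != i) ('X - (j%:R * t)%:P).

Lemma size_lagrange (i : 'I_N) : (size (lagrange i) <= N)%N.
Proof.
rewrite (leq_trans (size_scale_leq _ _)) // size_prod; last first.
  by move=> j _; rewrite polyXsubC_eq0.
rewrite (eq_bigr (fun _ => 2%N)) => [|j _]; last by rewrite size_XsubC.
rewrite sum_nat_const.
have -> : #|[pred j : 'I_N | j != i]| = N.-1.
  by rewrite -[in RHS](card_ord N) -(cardC1 i); apply: eq_card => j.
by have := ltn_ord i; lia.
Qed.

Definition interp (phi : R -> R) : {poly R} := \sum_(i < N) phi (i%:R * t) *: lagrange i.

Lemma size_interp phi : (size (interp phi) <= N)%N.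
Proof.
apply: (big_ind (fun P : {poly R} => (size P <= N)%N)) => [|P Q sP sQ|i _].
- by rewrite size_poly0.
- by rewrite (leq_trans (size_polyD _ _)) // geq_max sP sQ.
- by rewrite (leq_trans (size_scale_leq _ _)) // size_lagrange.
Qed.

Hypothesis t0 : t != 0.

Lemma lagrange_node (i k : 'I_N) : (lagrange i).[k%:R * t] = (i == k)%:R.
Proof.
rewrite /lagrange hornerZ horner_prod; under eq_bigr do rewrite hornerXsubC.
have [<-|ik] := eqVneq i k; last first.
  by rewrite [X in _ * X](bigD1 k) 1?eq_sym //= subrr mul0r mulr0.
under eq_bigr do rewrite -mulrBl.
rewrite mulVf //; apply/prodf_neq0 => j ji.
by rewrite mulf_neq0 // subr_eq0 eqr_nat eq_sym.
Qed.

Lemma interp_node phi (k : 'I_N) : (interp phi).[k%:R * t] = phi (k%:R * t).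
Proof.
rewrite /interp horner_sum (bigD1 k) //= big1 ?addr0 => [|i ik].
  by rewrite hornerZ lagrange_node eqxx mulr1.
by rewrite hornerZ lagrange_node (negbTE ik) mulr0.
Qed.

End Lagrange.

Lemma poly_nat_roots_eq0 (R : numFieldType) N (Q : {poly R}) :
  (size Q <= N)%N -> (forall i, (i < N)%N -> Q.[i%:R] = 0) -> Q = 0.
Proof.
move=> sQ hz; apply/eqP; apply: contraT => Q0.
have := @max_poly_roots _ Q [seq i%:R | i <- iota 0 N] Q0.
rewrite size_map size_iota ltnNge sQ; apply.
  apply/allP => x; case/mapP => i; rewrite mem_iota add0n => /andP [_ iN] ->.
  by rewrite /root hz.
by rewrite map_inj_uniq ?iota_uniq // => a b /eqP; rewrite eqr_nat => /eqP.
Qed.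

Lemma continuous_rat_eq0 (R : realType) (phi : R -> R) : continuous phi ->
  (forall K : nat, (0 < K)%N -> forall z : int, phi (z%:~R / K%:R) = 0) -> phi = fun _ => 0.
Proof.
move=> cphi hz; apply/funext => x; apply/eqP; apply: contraT => nz.
have e0 : 0 < `|phi x| by rewrite normr_gt0.
have := cphi x; move/fcvgrPdist_lt/(_ _ e0) => /nbhs_ballP [d /= d0 Hd].
pose k : R := (Num.truncn d^-1).+1%:R.
have hk : d^-1 < k by apply: truncnS_gt.
have k0 : 0 < k by rewrite ltr0n.
pose z := Num.floor (x * k).
have [h1 h2] : z%:~R <= x * k /\ x * k < z%:~R + 1.
  by have /andP [a b] := floor_itv (x * k); split => //; rewrite intrD in b.
have hb : ball x d (z%:~R / k).
  rewrite -ball_normE /ball_ /= ger0_norm; last by rewrite subr_ge0 ler_pdivrMr.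
  have -> : x - z%:~R / k = (x * k - z%:~R) / k by field; rewrite gt_eqF.
  rewrite ltr_pdivrMr //; have : 1 < d * k by rewrite -(mulfV (lt0r_neq0 d0)) ltr_pM2l.
  lra.
by have := Hd _ hb; rewrite /= hz // subr0 ltxx.
Qed.

(* Subtracting the interpolation polynomial on the nodes (j / K), the
   difference vanishes on N consecutive nodes, hence on all of Z / K. *)
Lemma continuous_diffn_eq0 (R : realType) N (phi : R -> R) : continuous phi ->
  (forall t, 0 < t -> diffn N t phi = fun _ => 0) ->
  (forall i, (i < N)%N -> phi i%:R = 0) -> phi = fun _ => 0.
Proof.
move=> cphi hD hz; apply: continuous_rat_eq0 => // K K0 z.
have t0 : 0 < K%:R^-1 :> R by rewrite invr_gt0 ltr0n.
set t := K%:R^-1 in t0 *; pose Q := interp N t phi.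
pose psi x := phi x - Q.[x].
have psi_diffn : diffn N t psi = fun _ => 0.
  by rewrite diffn_sub hD // diffn_horner_eq0 ?size_interp //; apply/funext => x; rewrite subr0.
have psi_int : forall z : int, psi (t *~ z) = 0.
  apply: diffn_eq0_int_zeros psi_diffn _ => i iN.
  by rewrite /psi -mulr_natl (interp_node (lt0r_neq0 t0) phi (Ordinal iN)) subrr.
have Q0 : Q = 0.
  apply: poly_nat_roots_eq0 (size_interp _ _ _) _ => i iN.
  have := psi_int (i * K)%N; rewrite /psi -mulrzr -[_%:~R]/((i * K)%N%:R) natrM.
  rewrite mulrCA /t mulVf ?pnatr_eq0 -?lt0n // mulr1 hz // sub0r.
  by move=> /eqP; rewrite oppr_eq0 => /eqP.
by have := psi_int z; rewrite /psi Q0 horner0 subr0 -mulrzr mulrC.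
Qed.

Lemma diffn_line (R : comNzRingType) (U : lmodType R) (F : U -> R) (x0 e : U) N (t : R) :
  diffn N t (fun s => F (x0 + s *: e)) = fun s => diffn N (t *: e) F (x0 + s *: e).
Proof.
apply/funext => s; rewrite !diffn_polyshift; apply: eq_bigr => i _.
by rewrite scalerDl addrA scalerMnl.
Qed.

Section TensorInterpolation.
Variables (R : realType) (n N : nat).
Implicit Types (f : 'cV[R]_n -> R) (x : 'cV[R]_n) (k : 'I_n).

Definition mpoly_at_coord k (P : {poly R}) : mpoly.mpoly n R :=
  \sum_(j < size P) P`_j *: @mpoly.mpolyX n R (mpoly.mnm1 k) ^+ j.

Lemma meval_mpoly_at_coord k P (v : 'I_n -> R) :
  mpoly.meval v (mpoly_at_coord k P) = P.[v k].
Proof.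
rewrite /mpoly_at_coord rmorph_sum horner_coef; apply: eq_bigr => j _.
by rewrite /= mpoly.mevalZ rmorphXn /= mpoly.mevalXU.
Qed.

Definition grid_pt (a : {ffun 'I_n -> 'I_N}) : 'cV[R]_n := \col_k (a k)%:R.

Definition tensor_interp f x : R :=
  \sum_(a : {ffun 'I_n -> 'I_N}) f (grid_pt a) * \prod_k (lagrange 1 (a k)).[x k 0].

Lemma tensor_interp_polynomial f : is_polynomial_fun (tensor_interp f).
Proof.
exists (\sum_(a : {ffun 'I_n -> 'I_N})
  f (grid_pt a) *: \prod_k mpoly_at_coord k (lagrange 1 (a k))).
move=> x; rewrite rmorph_sum; apply: eq_bigr => a _; rewrite /= mpoly.mevalZ rmorph_prod.
by congr (_ * _); apply: eq_bigr => k _; rewrite /= meval_mpoly_at_coord.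
Qed.

Lemma lagrange1_node (i j : 'I_N) : (lagrange (1 : R) i).[j%:R] = (i == j)%:R.
Proof. by rewrite -[j%:R]mulr1 lagrange_node ?oner_neq0. Qed.

Lemma tensor_interp_grid f a : tensor_interp f (grid_pt a) = f (grid_pt a).
Proof.
rewrite /tensor_interp (bigD1 a) //= [X in _ + X]big1 ?addr0 => [|b ba].
  by rewrite big1 ?mulr1 // => k _; rewrite mxE lagrange1_node eqxx.
have [k bk] : exists k, b k != a k.
  apply/existsP; rewrite -negb_forall; apply: contra ba => /forallP h.
  by apply/eqP/ffunP => k; apply/eqP.
by rewrite (bigD1 k) //= mxE lagrange1_node (negbTE bk) mul0r mulr0.
Qed.

Definition set_coord x k (s : R) : 'cV[R]_n := \col_j (if j == k then s else x j 0).

Lemma set_coordE x k s : set_coord x k s = set_coord x k 0 + s *: delta_mx k 0.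
Proof.
apply/matrixP => j i; rewrite !mxE (ord1 i) /= eqxx andbT.
by case: eqP => _; rewrite ?mulr1 ?mulr0 ?addr0 ?add0r.
Qed.

Lemma set_coord_id x k : set_coord x k (x k 0) = x.
Proof. by apply/matrixP => j i; rewrite !mxE (ord1 i); case: eqP => // ->. Qed.

Lemma tensor_interp_set_coord f x k : exists2 Q : {poly R}, (size Q <= N)%N &
  forall s, tensor_interp f (set_coord x k s) = Q.[s].
Proof.
exists (\sum_(a : {ffun 'I_n -> 'I_N})
  (f (grid_pt a) * \prod_(j < n | j != k) (lagrange 1 (a j)).[x j 0]) *: lagrange 1 (a k)).
  apply: (big_ind (fun P : {poly R} => (size P <= N)%N)) => [|P Q sP sQ|a _].
  - by rewrite size_poly0.
  - by rewrite (leq_trans (size_polyD _ _)) // geq_max sP sQ.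
  - by rewrite (leq_trans (size_scale_leq _ _)) // size_lagrange.
move=> s; rewrite /tensor_interp horner_sum; apply: eq_bigr => a _.
rewrite hornerZ (bigD1 k) //= mxE eqxx -mulrA; congr (_ * _).
by rewrite mulrC; congr (_ * _); apply: eq_bigr => j jk; rewrite mxE (negbTE jk).
Qed.

End TensorInterpolation.
Arguments grid_pt {R n N} a.

Section Assembly.
Variables (R : realType) (n N : nat) (f : 'cV[R]_n -> R).
Hypotheses (f_cont : continuous f)
  (f_diffn : forall k t, 0 < t -> diffn N (t *: delta_mx k 0) f = fun _ => 0).

(* Along each coordinate line, f - tensor_interp f is continuous with vanishing
   N-th differences, so it vanishes once it does on the N nodes. *)
Lemma tensor_interp_line x k :
  (forall i : 'I_N, f (set_coord x k i%:R) = tensor_interp N f (set_coord x k i%:R)) ->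
  f x = tensor_interp N f x.
Proof.
move=> nodes; have [Q sQ QE] := tensor_interp_set_coord N f x k.
have lineE : (fun s => f (set_coord x k s)) =
    fun s => f (set_coord x k 0 + s *: delta_mx k 0).
  by apply/funext => s; rewrite set_coordE.
suff /(congr1 (fun g => g (x k 0))) : (fun s => f (set_coord x k s) - Q.[s]) = fun _ => 0.
  by rewrite /= -QE set_coord_id => /eqP; rewrite subr_eq0 => /eqP.
apply: (@continuous_diffn_eq0 _ N) => [s|t t0|i iN].
- apply: continuousB; last exact: continuous_horner.
  rewrite lineE -[X in {for s, continuous X}]/(f \o _); apply: continuous_comp; last exact: f_cont.
  by apply: continuousD; [exact: cst_continuous | exact: continuousZr_tmp].
- rewrite diffn_sub diffn_horner_eq0 // lineE diffn_line f_diffn //.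
  by apply/funext => s; rewrite subr0.
- by rewrite -QE (nodes (Ordinal iN)) subrr.
Qed.

Lemma diffn_coord_eq0_polynomial : is_polynomial_fun f.
Proof.
suff grid_coords : forall m (x : 'cV[R]_n),
    (forall j : 'I_n, (m <= j)%N -> exists i : 'I_N, x j 0 = i%:R) -> f x = tensor_interp N f x.
  have [P PE] := tensor_interp_polynomial N f; exists P => x.
  by rewrite (grid_coords n x) ?PE // => j; rewrite leqNgt ltn_ord.
elim => [|m IH] x xm.
  have [a ha] := boolp.choice (fun j : 'I_n => xm j (leq0n j)).
  have -> : x = grid_pt [ffun j => a j] by apply/matrixP => j i; rewrite (ord1 i) !mxE ffunE ha.
  by rewrite tensor_interp_grid.
have [mn|nm] := ltnP m n; last first.
  by apply: IH => j mj; have := ltn_ord j; rewrite ltnNge (leq_trans nm mj).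
apply: (tensor_interp_line (k := Ordinal mn)) => i; apply: IH => j mj.
have [->|jk] := eqVneq j (Ordinal mn); first by exists i; rewrite mxE eqxx.
rewrite mxE (negbTE jk); apply: xm; rewrite ltn_neqAle mj andbT eq_sym.
by apply: contraNneq jk => e; apply/eqP; apply: ord_inj.
Qed.

End Assembly.

Theorem mainTheorem12 (R : realType) (p q : nat) (hp : (0 < p)%N) (hq : (0 < q)%N)
  (V : set ('cV[R]_(p + q) -> R)) (f : 'cV[R]_(p + q) -> R) :
  is_subspace V ->
  finite_dim V ->
  (forall g, V g -> continuous g) ->
  (forall h g, V g -> V (tau h g)) ->
  (forall A g, @Opq R p q A -> V g -> V (OA A g)) ->
  V f ->
  is_polynomial_fun f.
Proof.
move=> _ V_span V_cont V_tau V_OA Vf.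
have [N HN] := coord_diffn_eq0 V_span V_tau V_OA hp hq.
by apply: (diffn_coord_eq0_polynomial (V_cont f Vf)) => k t t0; apply: HN.
Qed.
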